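(* Let $\mathbf{E}\subseteq\mathbf{A}$ be finite symmetric integral relation algebras. For every $n\in\omega$, the set $$\{1'\}\cup\{x^{(i)}:x\text{ a diversity atom of }\mathbf{A},\ i<n\}\cup\{J(a,n):a\text{ a diversity atom of }\mathbf{A}\}$$ is the set of atoms of a subalgebra of $\mathbf{C}_{\mathbf{E}}(\mathbf{A})$.
   Context: Relation algebras are in the sense of Tarski; $1'$ identity, $0'$ its complement, $;$ relative product; integral: $1'$ is an atom; symmetric: $x^{\smile}=x$; a diversity atom is an atom below $0'$. The algebra $\mathbf{C}_{\mathbf{E}}(\mathbf{A})$: for each atom $x$ of $\mathbf{A}$ let $c(x)$ be the atom of $\mathbf{E}$ with $x\le c(x)$; $T(i,j,k)$ iff $(i\le j=k)$ or $(j\le k=i)$ or $(k\le i=j)$. Atoms: $1'$ and $x^{(i)}$ for diversity atoms $x$ of $\mathbf{A}$ and $i\in\omega$ (distinct formal symbols). $C$ is the set of all permutations of $(1',1',1')$, $(1',x^{(i)},x^{(i)})$, and $(x^{(i)},y^{(j)},z^{(k)})$ with $x;y\ge z$ in $\mathbf{A}$ and ($c(x)=c(y)=c(z)\Rightarrow T(i,j,k)$). $\mathbf{C}_{\mathbf{E}}(\mathbf{A})$ is the algebra of all sets of atoms with set Boolean operations, identity $\{1'\}$, converse the identity map, and $X;Y=\{w:\exists u\in X,\exists v\in Y,(u,v,w)\in C\}$. For $a\in\mathbf{A}$ and $n\in\omega$, $J(a,n)$ is the join of all $x^{(i)}$ with $x$ a diversity atom of $\mathbf{A}$, $x\le a$,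 $n\le i$, together with $1'$ if $1'\le a$. *)

From mathcomp Require Import all_boot.
From mathcomp Require Import classical_sets.
From Stdlib Require Import ClassicalEpsilon.

Set Implicit Arguments.
Unset Strict Implicit.
Unset Printing Implicit Defensive.

Local Open Scope classical_set_scope.

Record ra_ops (T : Type) := RAOps {
  ra_join  : T -> T -> T;
  ra_compl : T -> T;
  ra_comp  : T -> T -> T;
  ra_conv  : T -> T;
  ra_id    : T }.

Section RA.
Variables (T : Type) (o : ra_ops T).
Local Notation j := (ra_join o).
Local Notation n := (ra_compl o).
Local Notation m := (ra_comp o).
Local Notation cv := (ra_conv o).
Local Notation e := (ra_id o).

(* Tarski's axioms R1--R10. *)
Definition is_RA : Prop :=
     (forall x y, j x y = j y x)
  /\ (forall x y z, j x (j y z) = j (j x y) z)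
  /\ (forall x y, j (n (j (n x) y)) (n (j (n x) (n y))) = x)
  /\ (forall x y z, m x (m y z) = m (m x y) z)
  /\ (forall x y z, m (j x y) z = j (m x z) (m y z))
  /\ (forall x, m x e = x)
  /\ (forall x, cv (cv x) = x)
  /\ (forall x y, cv (j x y) = j (cv x) (cv y))
  /\ (forall x y, cv (m x y) = m (cv y) (cv x))
  /\ (forall x y, j (m (cv x) (n (m x y))) (n y) = n y).

Definition ra_le (x y : T) : Prop := j x y = y.
Definition ra_one : T := j e (n e).
Definition ra_zero : T := n ra_one.
Definition ra_div : T := n e.

Definition ra_atom (x : T) : Prop :=
  x <> ra_zero /\ forall y, ra_le y x -> y = ra_zero \/ y = x.
Definition div_atom (x : T) : Prop := ra_atom x /\ ra_le x ra_div.

Definition ra_integral : Prop := ra_atom e.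
Definition ra_symmetric : Prop := forall x, cv x = x.

Definition is_subRA (E : T -> Prop) : Prop :=
  [/\ E e,
      (forall x y, E x -> E y -> E (j x y)),
      (forall x, E x -> E (n x)),
      (forall x y, E x -> E y -> E (m x y)) &
      (forall x, E x -> E (cv x))].

Definition sub_atom (E : T -> Prop) (x : T) : Prop :=
  [/\ E x, x <> ra_zero &
      forall y, E y -> ra_le y x -> y = ra_zero \/ y = x].
End RA.

(* Atoms of C_E(A): 1' and formal symbols x^(i), x a diversity atom of A. *)
Inductive catom (T : Type) (P : T -> Prop) : Type :=
| CI : catom P
| CX : {x : T | P x} -> nat -> catom P.
Arguments CI {T P}.

Section CE.
Variables (T : Type) (o : ra_ops T) (E : T -> Prop).
Local Notation At := (catom (div_atom o)).

Definition cE (x : T) : T :=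
  epsilon (inhabits (ra_id o)) (fun y => sub_atom o E y /\ ra_le o x y).

Definition Tcond (i j k : nat) : Prop :=
  ((i <= j)%N /\ j = k) \/ ((j <= k)%N /\ k = i) \/ ((k <= i)%N /\ i = j).

(* the generating triples (before closing under permutations) *)
Definition Cbase (u v w : At) : Prop :=
  match u, v, w with
  | CI, CI, CI => True
  | CI, CX x i, CX y j => proj1_sig x = proj1_sig y /\ i = j
  | CX x i, CX y j, CX z k =>
      ra_le o (proj1_sig z) (ra_comp o (proj1_sig x) (proj1_sig y)) /\
      (cE (proj1_sig x) = cE (proj1_sig y) /\ cE (proj1_sig y) = cE (proj1_sig z)
         -> Tcond i j k)
  | _, _, _ => False
  end.

Definition Crel (u v w : At) : Prop :=
  Cbase u v w \/ Cbase u w v \/ Cbase v u w \/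
  Cbase v w u \/ Cbase w u v \/ Cbase w v u.

(* operations of the complex algebra C_E(A) on sets of atoms *)
Definition cid : set At := [set CI].
Definition cconv (X : set At) : set At := X.
Definition ccomp (X Y : set At) : set At :=
  [set w | exists u v, X u /\ Y v /\ Crel u v w].

Definition is_subalg (B : set (set At)) : Prop :=
  [/\ B cid,
      (forall X Y, B X -> B Y -> B (X `|` Y)),
      (forall X, B X -> B (~` X)),
      (forall X, B X -> B (cconv X)) &
      (forall X Y, B X -> B Y -> B (ccomp X Y))].

Definition atoms_of (B : set (set At)) : set (set At) :=
  [set X | [/\ B X, X <> set0 &
            forall Y, B Y -> Y `<=` X -> Y = set0 \/ Y = X]].

Definition J (a : T) (n : nat) : set At :=
  [set w | match w with
           | CI => ra_le o (ra_id o) a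
           | CX x i => ra_le o (proj1_sig x) a /\ (n <= i)%N
           end].
End CE.

Arguments is_subalg {T} o E B.
Arguments J {T} o a n _.
Arguments cid {T} o _.
Arguments ccomp {T} o E X Y _.

From mathcomp Require Import all_boot.
From mathcomp Require Import classical_sets.
From mathcomp Require boolp.
From mathcomp Require Import zify.

Set Implicit Arguments.
Unset Strict Implicit.
Unset Printing Implicit Defensive.

Local Open Scope classical_set_scope.

(* Take the sets X of atoms of C_E(A) that are saturated above n: for
   i, k >= n, x^(i) is in X iff x^(k) is.  They are closed under relative
   product because collapsing every index >= n onto a single k >= n is a
   monotone map of indices, and monotone maps preserve T(i,j,k) and hence C.
   Their minimal nonempty members are the singletons {1'} and {x^(i)}, i < n,
   and the classes {a^(i) : i >= n}, which are the J(a,n). *)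

Section RelationAlgebraFacts.
Variables (T : Type) (o : ra_ops T).
Hypotheses (hRA : is_RA o) (hsym : ra_symmetric o).
Local Notation j := (ra_join o).
Local Notation n := (ra_compl o).
Local Notation e := (ra_id o).

Lemma ra_comp1l x : ra_comp o e x = x.
Proof.
case: hRA => _ [_ [_ [_ [_ [R6 [_ [_ [R9 _]]]]]]]].
by rewrite -[LHS]hsym R9 !hsym R6.
Qed.

Lemma ra_join_compl_idem x : j (n x) (n x) = n x.
Proof.
case: hRA => _ [_ [_ [_ [_ [_ [_ [_ [_ R10]]]]]]]].
by have := R10 e x; rewrite hsym !ra_comp1l.
Qed.

(* Huntington's axiom with y := x writes x as a join of two complements;
   complements are idempotent by R10 with x := 1', hence so is their join. *)
Lemma ra_join_idem x : j x x = x.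
Proof.
case: hRA => C [A [H _]].
have idem_join_compl a b : j (j (n a) (n b)) (j (n a) (n b)) = j (n a) (n b).
  rewrite -A (A (n b) (n a) (n b)) (C (n b) (n a)) -A ra_join_compl_idem.
  by rewrite A ra_join_compl_idem.
by rewrite -{1 2}(H x x) idem_join_compl H.
Qed.

Lemma ra_le_refl x : ra_le o x x.
Proof. exact: ra_join_idem. Qed.

Lemma ra_atom_le_eq a x : ra_atom o a -> ra_atom o x -> ra_le o x a -> x = a.
Proof. by move=> [_ ha] [xnz _] /ha []. Qed.

Lemma ra_id_not_le_div_atom a : ra_integral o -> div_atom o a -> ~ ra_le o e a.
Proof.
move=> [enz _] [[_ ha] hadiv] /ha [//|ea]; subst a.
case: hRA => C [_ [H _]].
apply: enz; rewrite /ra_zero /ra_one hadiv.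
by have := H e e; rewrite (C (n e) e) hadiv !ra_join_idem.
Qed.
End RelationAlgebraFacts.

Section Relabel.
Variables (T : Type) (o : ra_ops T) (E : T -> Prop).
Local Notation At := (catom (div_atom o)).

Definition relabel (f : nat -> nat) (w : At) : At :=
  match w with CI => CI | CX x i => CX x (f i) end.

Variable f : nat -> nat.
Hypothesis f_homo : {homo f : a b / (a <= b)%N}.

Lemma Tcond_homo i k l : Tcond i k l -> Tcond (f i) (f k) (f l).
Proof.
rewrite /Tcond => -[[/f_homo ? ?]|[[/f_homo ? ?]|[/f_homo ? ?]]]; subst;
  by [left|right; left|right; right].
Qed.

Lemma Cbase_relabel u v w :
  Cbase E u v w -> Cbase E (relabel f u) (relabel f v) (relabel f w).
Proof.
case: u v w => [|x i] [|y k] [|z l] //=; first by move=> [-> ->].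
by move=> [zxy hT]; split=> // /hT; apply: Tcond_homo.
Qed.

Lemma Crel_relabel u v w :
  Crel E u v w -> Crel E (relabel f u) (relabel f v) (relabel f w).
Proof.
by move=> [|[|[|[|[|]]]]] /Cbase_relabel;
  [left|right; left|do 2 right; left|do 3 right; left|do 4 right; left|do 5 right].
Qed.
End Relabel.

Section Saturated.
Variables (T : Type) (o : ra_ops T) (E : T -> Prop) (n : nat).
Local Notation At := (catom (div_atom o)).

Definition saturated (X : set At) : Prop :=
  forall x i k, (n <= i)%N -> (n <= k)%N -> X (CX x i) -> X (CX x k).

Definition collapse (k t : nat) : nat := if (t < n)%N then t else k.

Lemma collapse_homo k : (n <= k)%N -> {homo collapse k : a b / (a <= b)%N}.
Proof. by rewrite /collapse => hk a b ab; case: ifP; case: ifP; lia. Qed.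

Lemma saturated_relabel_collapse X k w :
  (n <= k)%N -> saturated X -> X w -> X (relabel (collapse k) w).
Proof.
move=> hk sX; case: w => [|x t] //=; rewrite /collapse.
by case: ltnP => // ht; apply: sX.
Qed.

Lemma saturated_ccomp X Y :
  saturated X -> saturated Y -> saturated (ccomp o E X Y).
Proof.
move=> sX sY z i k hi hk [u [v [Xu [Yv Cuvz]]]].
have -> : CX z k = relabel (collapse k) (CX z i) by rewrite /= /collapse ltnNge hi.
exists (relabel (collapse k) u), (relabel (collapse k) v).
split; first exact: saturated_relabel_collapse.
split; first exact: saturated_relabel_collapse.
exact/Crel_relabel/Cuvz/collapse_homo.
Qed.

Lemma saturated_set1 w : (if w is CX _ i then (i < n)%N else True) ->
  saturated [set w].
Proof.
case: w => [|y t] ht x i k hi _ /= h; first by [].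
by case: h => _ hit; lia.
Qed.

Lemma is_subalg_saturated : is_subalg o E saturated.
Proof.
split.
- exact: saturated_set1.
- by move=> X Y sX sY x i k hi hk [/sX|/sY] h; [left|right]; apply: h.
- by move=> X sX x i k hi hk nXi Xk; apply/nXi/(sX x k i).
- by [].
- exact: saturated_ccomp.
Qed.

Lemma saturated_J a : saturated (J o a n).
Proof. by move=> x i k _ hk [ha _]. Qed.
End Saturated.

Section Atoms.
Variables (T : Type) (o : ra_ops T).
Hypotheses (hRA : is_RA o) (hint : ra_integral o) (hsym : ra_symmetric o).
Local Notation At := (catom (div_atom o)).

Lemma sig_div_atom_inj (x y : {x : T | div_atom o x}) :
  proj1_sig x = proj1_sig y -> x = y.
Proof. by case: x y => x px [y py] /= xy; apply: boolp.eq_exist. Qed.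

Lemma J_CI a n : div_atom o a -> ~ J o a n CI.
Proof. exact: ra_id_not_le_div_atom. Qed.

Lemma J_CX a n x i : div_atom o a ->
  J o a n (CX x i) <-> proj1_sig x = a /\ (n <= i)%N.
Proof.
case: x => x [xat xdiv] [aat adiv] /=; split=> [[xa ->]|[-> ->]].
- by split=> //; exact: ra_atom_le_eq aat xat xa.
- by split=> //; exact: ra_le_refl hRA hsym a.
Qed.

Lemma atoms_of_saturated_J a n : div_atom o a -> atoms_of (saturated n) (J o a n).
Proof.
move=> ha; split; first exact: saturated_J.
  move/seteqP=> [/(_ (CX (exist _ a ha) n))] J0 _; apply: J0; exact/J_CX.
move=> Y sY YJ; have [->|/set0P [[|y k] Yw]] := eqVneq Y set0; [by left| |].
  by case: (J_CI ha (YJ _ Yw)).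
right; case/(J_CX _ _ _ ha): (YJ _ Yw) => ya hk.
apply/seteqP; split=> // -[|y' k'] Jw; first by case: (J_CI ha Jw).
case/(J_CX _ _ _ ha): Jw => y'a hk'.
by rewrite (@sig_div_atom_inj y' y) ?ya ?y'a //; apply: (sY y k k').
Qed.

Lemma atoms_of_set1 (B : set (set At)) w : B [set w] -> atoms_of B [set w].
Proof.
move=> Bw; split=> // [|Y _ /subset_set1 //].
by move/seteqP=> [/(_ w erefl)].
Qed.

Lemma atoms_of_sub (B : set (set At)) X Y w :
  atoms_of B X -> B Y -> Y `<=` X -> Y w -> Y = X.
Proof. by move=> [_ _ Xmin] BY /(Xmin _ BY) [-> //|//]. Qed.

Lemma atoms_of_saturated n X :
  atoms_of (saturated n) X <->
  [\/ X = cid o,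
      (exists x i, (i < n)%N /\ X = [set CX x i]) |
      (exists a, div_atom o a /\ X = J o a n)].
Proof.
split.
- move=> Xat; have [sX /eqP/set0P [[|x i] Xw] _] := Xat.
    apply: Or31; rewrite /cid; apply: esym.
    by apply: (atoms_of_sub Xat (saturated_set1 (w := CI) I)) => // _ ->.
  have [hin|hin] := ltnP i n.
    apply: Or32; exists x, i; split=> //; apply: esym.
    by apply: (atoms_of_sub Xat (saturated_set1 (w := CX x i) hin)) => // _ ->.
  have hx := proj2_sig x.
  apply: Or33; exists (proj1_sig x); split=> //; apply: esym.
  apply: (atoms_of_sub Xat (saturated_J (a := proj1_sig x))); last exact/(J_CX _ _ _ hx).
  case=> [|y k] /=; first by move/(J_CI hx).
  by case/(J_CX _ _ _ hx) => /sig_div_atom_inj -> hk; apply: (sX x i k).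
- case=> [->|[x [i [hin ->]]]|[a [ha ->]]].
  + exact/atoms_of_set1/saturated_set1.
  + exact/atoms_of_set1/saturated_set1.
  + exact: atoms_of_saturated_J.
Qed.
End Atoms.

Theorem lemma5 (T : finType) (o : ra_ops T) (E : T -> Prop) :
  is_RA o -> ra_integral o -> ra_symmetric o ->
  is_subRA o E -> sub_atom o E (ra_id o) ->
  forall n : nat,
  exists B : set (set (catom (div_atom o))),
    is_subalg o E B /\
    atoms_of B =
      [set X | X = cid o \/
               (exists (x : {x : T | div_atom o x}) (i : nat),
                   (i < n)%N /\ X = [set CX x i]) \/
               (exists a : T, div_atom o a /\ X = J o a n)].
Proof.
move=> hRA hint hsym _ _ n; exists (saturated n); split.
  exact: is_subalg_saturated.
apply/seteqP; split=> X.
- by case/(atoms_of_saturated hRA hint hsym) => h; [left|right; left|right; right].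
- by move=> h; apply/(atoms_of_saturated hRA hint hsym);
    case: h => [|[|]] h; [apply: Or31|apply: Or32|apply: Or33].
Qed.
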